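(* Let $G$ be a TDLC-group and $M$ a finitely generated discrete $\mathbb{Q}[G]$-module. Any two filling pseudo-norms on $M$ are equivalent. In particular, every filling pseudo-norm on a finitely generated proper permutation module $\mathbb{Q}[\Omega]$ is equivalent to the $\ell_1$-norm $\|\cdot\|_1^\Omega$, and hence is a norm.
   Context: A TDLC-group is a totally disconnected locally compact Hausdorff topological group. A discrete $\mathbb{Q}[G]$-module is a left $\mathbb{Q}[G]$-module in which every element has open stabilizer. A $G$-set $\Omega$ is proper if all point stabilizers are compact open; $\mathbb{Q}[\Omega]$ is then a proper permutation module, finitely generated iff $\Omega/G$ is finite, with $\ell_1$-norm $\|\sum a_\omega\omega\|_1^\Omega=\sum|a_\omega|$. For a surjection $\partial:\mathbb{Q}[\Omega]\twoheadrightarrow M$ from a finitely generated proper permutation module, the filling pseudo-norm is $\|m\|_\partial=\inf\{\|x\|_1^\Omega:\partial(x)=m\}$. Two pseudo-norms $\|\cdot\|,\|\cdot\|'$ on a vector space $V$ are equivalent if there is $C>0$ with $\|v\|\le C\|v\|'$ and $\|v\|'\le C\|v\|$ for all $v\in V$. *)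

From HB Require Import structures.
From Stdlib Require Import Reals ZArith ClassicalEpsilon ProofIrrelevance
  FunctionalExtensionality.
From mathcomp Require Import all_boot all_order all_algebra.

Set Implicit Arguments.
Unset Strict Implicit.
Unset Printing Implicit Defensive.

Import GRing.Theory Num.Theory.

Definition compact_in (T : Type) (op : (T -> Prop) -> Prop) (K : T -> Prop) :=
  forall (I : Type) (U : I -> T -> Prop),
    (forall i, op (U i)) ->
    (forall x, K x -> exists i, U i x) ->
    exists s : list I, forall x, K x -> exists i, List.In i s /\ U i x.

Definition connected_in (T : Type) (op : (T -> Prop) -> Prop) (S : T -> Prop) :=
  forall U V : T -> Prop, op U -> op V ->
    (forall x, S x -> U x \/ V x) ->
    (forall x, S x -> U x -> V x -> False) ->
    (exists x, S x /\ U x) -> (exists x, S x /\ V x) -> False.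

Record TDLCGroup := {
  carrier :> Type;
  gmul : carrier -> carrier -> carrier;
  ginv : carrier -> carrier;
  gone : carrier;
  gmulA : forall x y z, gmul x (gmul y z) = gmul (gmul x y) z;
  gmul1l : forall x, gmul gone x = x;
  gmul1r : forall x, gmul x gone = x;
  gmulVl : forall x, gmul (ginv x) x = gone;
  gmulVr : forall x, gmul x (ginv x) = gone;
  gopen : (carrier -> Prop) -> Prop;
  gopen_full : gopen (fun _ => True);
  gopen_inter : forall U V, gopen U -> gopen V -> gopen (fun x => U x /\ V x);
  gopen_union : forall (I : Type) (F : I -> carrier -> Prop),
      (forall i, gopen (F i)) -> gopen (fun x => exists i, F i x);
  gopen_ext : forall U V, (forall x, U x <-> V x) -> gopen U -> gopen V;
  gmul_cont : forall W x y, gopen W -> W (gmul x y) ->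
      exists U V, gopen U /\ gopen V /\ U x /\ V y /\
                  (forall u v, U u -> V v -> W (gmul u v));
  ginv_cont : forall W, gopen W -> gopen (fun x => W (ginv x));
  g_hausdorff : forall x y, x <> y ->
      exists U V, gopen U /\ gopen V /\ U x /\ V y /\ (forall z, U z -> V z -> False);
  g_loc_compact : forall x, exists U K, gopen U /\ compact_in gopen K /\ U x /\
                                      (forall z, U z -> K z);
  g_tot_disc : forall S, connected_in gopen S -> forall x y, S x -> S y -> x = y
}.

Definition compact_open (G : TDLCGroup) (S : G -> Prop) :=
  gopen S /\ compact_in (@gopen G) S.

Record GSet (G : TDLCGroup) := {
  gs_carrier :> choiceType;
  gs_act : G -> gs_carrier -> gs_carrier;
  gs_act1 : forall w, gs_act (gone G) w = w;
  gs_actM : forall g h w, gs_act (gmul g h) w = gs_act g (gs_act h w)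
}.

Definition proper_gset (G : TDLCGroup) (O : GSet G) :=
  forall w : O, compact_open (fun g : G => @gs_act _ O g w = w).

Definition finite_orbits (G : TDLCGroup) (O : GSet G) :=
  exists s : seq O, forall w : O, exists (g : G) (r : O), r \in s /\ w = @gs_act _ O g r.

(* The permutation module Q[Omega]: finitely supported functions       *)

Record fsq (O : choiceType) := FSQ {
  fsq_fun :> O -> rat;
  fsq_fin : exists s : seq O, forall w, fsq_fun w != (0 : rat) -> w \in s
}.

Section FSQ.
Variable O : choiceType.
Local Open Scope ring_scope.

Lemma fsq_inj (x y : fsq O) : fsq_fun x = fsq_fun y -> x = y.
Proof.
case: x => f pf; case: y => g pg /= E; subst g.
by rewrite (proof_irrelevance _ pf pg).
Qed.

Definition fsq_eqb (x y : fsq O) : bool :=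
  if excluded_middle_informative (x = y) then true else false.

Lemma fsq_eqP : Equality.axiom fsq_eqb.
Proof.
by move=> x y; rewrite /fsq_eqb; case: excluded_middle_informative => H;
  constructor.
Qed.

HB.instance Definition _ := hasDecEq.Build (fsq O) fsq_eqP.

Definition fsq_find (P : pred (fsq O)) (n : nat) : option (fsq O) :=
  match excluded_middle_informative (exists x, P x) with
  | left H => Some (proj1_sig (constructive_indefinite_description _ H))
  | right _ => None
  end.

Lemma fsq_find_correct P n x : fsq_find P n = Some x -> P x.
Proof.
rewrite /fsq_find; case: excluded_middle_informative => // H [<-].
by case: constructive_indefinite_description.
Qed.

Lemma fsq_find_complete (P : pred (fsq O)) :
  (exists x, P x) -> exists n, fsq_find P n.
Proof.
by move=> H; exists 0%N; rewrite /fsq_find; case: excluded_middle_informative.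
Qed.

Lemma fsq_find_ext (P Q : pred (fsq O)) : P =1 Q -> fsq_find P =1 fsq_find Q.
Proof.
by move=> E n; have -> : P = Q by apply: functional_extensionality.
Qed.

HB.instance Definition _ := hasChoice.Build (fsq O)
  fsq_find_correct fsq_find_complete fsq_find_ext.

Program Definition fsq0 : fsq O := @FSQ O (fun _ => 0) _.
Next Obligation. by exists [::]. Qed.

Program Definition fsq_add (x y : fsq O) : fsq O :=
  @FSQ O (fun w => x w + y w) _.
Next Obligation.
case: (fsq_fin x) => s Hs; case: (fsq_fin y) => t Ht.
exists (s ++ t) => w; rewrite mem_cat.
case: (boolP (x w == 0)) => [/eqP -> | /Hs -> //].
by rewrite add0r => /Ht ->; rewrite orbT.
Qed.

Program Definition fsq_opp (x : fsq O) : fsq O := @FSQ O (fun w => - x w) _.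
Next Obligation.
case: (fsq_fin x) => s Hs; exists s => w; rewrite oppr_eq0; exact: Hs.
Qed.

Program Definition fsq_scale (a : rat) (x : fsq O) : fsq O :=
  @FSQ O (fun w => a * x w) _.
Next Obligation.
case: (fsq_fin x) => s Hs; exists s => w; rewrite mulf_eq0 negb_or.
by case/andP => _; exact: Hs.
Qed.

Lemma fsq_addA : associative fsq_add.
Proof. by move=> x y z; apply: fsq_inj; apply: functional_extensionality => w /=; rewrite addrA. Qed.
Lemma fsq_addC : commutative fsq_add.
Proof. by move=> x y; apply: fsq_inj; apply: functional_extensionality => w /=; rewrite addrC. Qed.
Lemma fsq_add0 : left_id fsq0 fsq_add.
Proof. by move=> x; apply: fsq_inj; apply: functional_extensionality => w /=; rewrite add0r. Qed.
Lemma fsq_addN : left_inverse fsq0 fsq_opp fsq_add.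
Proof. by move=> x; apply: fsq_inj; apply: functional_extensionality => w /=; rewrite addNr. Qed.

HB.instance Definition _ := GRing.isZmodule.Build (fsq O)
  fsq_addA fsq_addC fsq_add0 fsq_addN.

Lemma fsq_scaleA a b v : fsq_scale a (fsq_scale b v) = fsq_scale (a * b) v.
Proof. by apply: fsq_inj; apply: functional_extensionality => w /=; rewrite mulrA. Qed.
Lemma fsq_scale1 : left_id 1 fsq_scale.
Proof. by move=> x; apply: fsq_inj; apply: functional_extensionality => w /=; rewrite mul1r. Qed.
Lemma fsq_scaleDr : right_distributive fsq_scale +%R.
Proof. by move=> a x y; apply: fsq_inj; apply: functional_extensionality => w /=; rewrite mulrDr. Qed.
Lemma fsq_scaleDl v : {morph fsq_scale^~ v : a b / a + b}.
Proof. by move=> a b; apply: fsq_inj; apply: functional_extensionality => w /=; rewrite mulrDl. Qed.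

HB.instance Definition _ := GRing.Zmodule_isLmodule.Build rat (fsq O)
  fsq_scaleA fsq_scale1 fsq_scaleDr fsq_scaleDl.

Definition fsq_supp (x : fsq O) : seq O :=
  proj1_sig (constructive_indefinite_description _ (fsq_fin x)).

(* the l1-norm; independent of the chosen list since off-support terms
   vanish *)
Definition l1 (x : fsq O) : rat := \sum_(w <- undup (fsq_supp x)) `|x w|.

End FSQ.

Program Definition fsq_act (G : TDLCGroup) (O : GSet G) (g : G) (x : fsq O) : fsq O :=
  @FSQ O (fun w => x (@gs_act _ O (ginv g) w)) _.
Next Obligation.
case: (fsq_fin x) => s Hs; exists (map (@gs_act _ O g) s) => w /Hs H.
apply/mapP; exists (@gs_act _ O (ginv g) w) => //.
by rewrite -gs_actM gmulVr gs_act1.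
Qed.

Record DiscreteModule (G : TDLCGroup) := {
  dm_carrier :> lmodType rat;
  dm_act : G -> dm_carrier -> dm_carrier;
  dm_act_lin : forall g (a : rat) (u v : dm_carrier),
      dm_act g (a *: u + v)%R = (a *: dm_act g u + dm_act g v)%R;
  dm_act1 : forall m, dm_act (gone G) m = m;
  dm_actM : forall g h m, dm_act (gmul g h) m = dm_act g (dm_act h m);
  dm_discrete : forall m, gopen (fun g : G => dm_act g m = m)
}.

Definition fg_module (G : TDLCGroup) (M : DiscreteModule G) :=
  exists gens : seq M, forall m : M,
    exists l : seq (rat * G * M),
      (forall t, List.In t l -> t.2 \in gens) /\
      m = (\sum_(t <- l) t.1.1 *: @dm_act _ M t.1.2 t.2)%R.

Definition int2Z (z : int) : Z :=
  match z with Posz n => Z.of_nat n | Negz n => Z.opp (Z.of_nat n.+1) end.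

Definition rat2R (q : rat) : R := Rdiv (IZR (int2Z (numq q))) (IZR (int2Z (denq q))).

Definition is_inf (E : R -> Prop) (r : R) : Prop :=
  (forall x, E x -> Rle r x) /\
  (forall b, (forall x, E x -> Rle b x) -> Rle b r).

(* infimum of a set of reals (a chosen greatest lower bound; it exists
   for the nonempty, nonnegative sets used below) *)
Definition inf_R (E : R -> Prop) : R := epsilon (inhabits R0) (is_inf E).

Definition filling_map (G : TDLCGroup) (O : GSet G) (M : lmodType rat)
    (actM : G -> M -> M) (d : {linear fsq O -> M}) : Prop :=
  [/\ proper_gset O, finite_orbits O,
      (forall (g : G) (x : fsq O), d (fsq_act g x) = actM g (d x))
    & (forall m : M, exists x : fsq O, d x = m)].

Definition filling_norm (O : choiceType) (M : lmodType rat)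
    (d : fsq O -> M) (m : M) : R :=
  inf_R (fun r => exists x : fsq O, d x = m /\ r = rat2R (l1 x)).

Definition l1R (O : choiceType) (x : fsq O) : R := rat2R (l1 x).

Definition equiv_pnorms (V : Type) (n1 n2 : V -> R) : Prop :=
  exists C : R, Rlt R0 C /\
    forall v, Rle (n1 v) (Rmult C (n2 v)) /\ Rle (n2 v) (Rmult C (n1 v)).

From HB Require Import structures.
From Stdlib Require Import Reals Lra ClassicalEpsilon FunctionalExtensionality.
From mathcomp Require Import all_boot all_order all_algebra.
From mathcomp Require Import Rstruct.

(* Let d1 : Q[O1] ->> M and d2 : Q[O2] ->> M be G-equivariant surjections,
   where O1 has finitely many orbits.  For each orbit representative r of O1
   choose a preimage under d2 of d1(delta_r); translating it by g gives a
   preimage of d1(delta_(g r)) of the same l1-norm, so every basis vector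
   delta_w of Q[O1] has a preimage y_w with |y_w|_1 <= K for one constant K.
   Expanding x = sum_w x_w delta_w then yields z := sum_w x_w y_w with
   d2 z = d1 x and |z|_1 <= K |x|_1 (lemma [lift_with_bounded_l1]).  Taking
   infima gives |m|_d2 <= K |m|_d1, and symmetry gives the equivalence
   ([filling_norms_equiv]).  The statement about Q[O] follows because the
   identity of Q[O] is itself a filling map whose filling norm is exactly
   the l1-norm ([filling_norm_id]); the l1-norm being definite, so is every
   filling norm equivalent to it. *)

Set Implicit Arguments.
Unset Strict Implicit.
Import Order.TTheory GRing.Theory Num.Theory.
Local Open Scope ring_scope.

Lemma int2ZE (z : int) : IZR (int2Z z) = (z%:~R : R).
Proof.
case: z => n /=; first by rewrite -INR_IZR_INZ INRE.
change (IZR (Z.opp (Z.of_nat n.+1)) = (Negz n)%:~R).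
by rewrite opp_IZR -INR_IZR_INZ INRE NegzE mulrNz.
Qed.

Lemma rat2RE (q : rat) : rat2R q = ratr q.
Proof. by rewrite /rat2R RdivE !int2ZE. Qed.

Lemma inf_RP (E : R -> Prop) :
  (exists x, E x) -> (forall x, E x -> Rle 0 x) -> is_inf E (inf_R E).
Proof.
move=> [x0 Ex0] lb.
have [m [ub lub]] : {m | is_lub (fun y => E (Ropp y)) m}.
  apply: completeness; last by exists (Ropp x0); rewrite Ropp_involutive.
  by exists R0 => y /lb; lra.
have inf_opp_m : is_inf E (Ropp m).
  split=> [x Ex | b hb].
    by have := ub (Ropp x); rewrite Ropp_involutive => /(_ Ex); lra.
  suff : Rle m (Ropp b) by lra.
  by apply: lub => y /hb; lra.
exact: (epsilon_spec (inhabits R0) (is_inf E) (ex_intro _ _ inf_opp_m)).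
Qed.

Section L1Norm.
Variable O : choiceType.
Implicit Types x y : fsq O.

Lemma fsq_addE x y w : (x + y) w = x w + y w. Proof. by []. Qed.
Lemma fsq_scaleE a x w : (a *: x) w = a * x w. Proof. by []. Qed.

Lemma fsq_sumE (I : Type) (s : seq I) (F : I -> fsq O) w :
  (\sum_(i <- s) F i) w = \sum_(i <- s) F i w.
Proof.
elim: s => [|i s IH]; first by rewrite !big_nil.
by rewrite !big_cons fsq_addE IH.
Qed.

Lemma fsq_suppP x w : x w != 0 -> w \in fsq_supp x.
Proof.
rewrite /fsq_supp; case: constructive_indefinite_description => s hs /=.
exact: hs.
Qed.

Lemma sum_over_supp (f : O -> rat) s t : uniq s -> uniq t ->
  (forall w, f w != 0 -> w \in s) -> (forall w, f w != 0 -> w \in t) ->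
  \sum_(w <- s) f w = \sum_(w <- t) f w.
Proof.
move=> us ut hs ht.
have nz_part u : \sum_(w <- u) f w = \sum_(w <- [seq w <- u | f w != 0]) f w.
  by rewrite big_filter [RHS]big_mkcond; apply: eq_bigr => w _ /=; case: eqP.
rewrite nz_part [RHS]nz_part; apply: perm_big.
apply: uniq_perm; rewrite ?filter_uniq // => w; rewrite !mem_filter.
by case: (boolP (f w != 0)) => //= h; rewrite (hs _ h) (ht _ h).
Qed.

Lemma l1E x s : uniq s -> (forall w, x w != 0 -> w \in s) ->
  l1 x = \sum_(w <- s) `|x w|.
Proof.
move=> us hs; apply: sum_over_supp; rewrite ?undup_uniq // => w;
  rewrite normr_eq0 => h; [rewrite mem_undup; exact: fsq_suppP | exact: hs].
Qed.

Lemma l1_ge0 x : 0 <= l1 x.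
Proof. exact: sumr_ge0. Qed.

Lemma l1_eq0 x : l1 x = 0 -> x = 0.
Proof.
move=> l1x0; apply: fsq_inj; apply: functional_extensionality => w /=.
apply/eqP/negPn/negP => nz.
have : `|x w| <= l1 x.
  rewrite /l1 (bigD1_seq w) ?undup_uniq ?mem_undup ?fsq_suppP //=.
  by rewrite lerDl sumr_ge0.
by rewrite l1x0 normr_le0 (negbTE nz).
Qed.

Lemma l1D x y : l1 (x + y) <= l1 x + l1 y.
Proof.
set s := undup (fsq_supp x ++ fsq_supp y).
have us : uniq s by rewrite undup_uniq.
have hx w : x w != 0 -> w \in s.
  by move=> h; rewrite mem_undup mem_cat (fsq_suppP h).
have hy w : y w != 0 -> w \in s.
  by move=> h; rewrite mem_undup mem_cat (fsq_suppP h) orbT.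
rewrite (l1E us hx) (l1E us hy) (@l1E (x + y) s us); last first.
  move=> w; rewrite fsq_addE; case: (boolP (x w != 0)) => [/hx //|].
  by rewrite negbK => /eqP ->; rewrite add0r => /hy.
by rewrite -big_split /=; apply: ler_sum => w _; exact: ler_normD.
Qed.

Lemma l1Z a x : l1 (a *: x) = `|a| * l1 x.
Proof.
have us := undup_uniq (fsq_supp x).
have hx w : x w != 0 -> w \in undup (fsq_supp x).
  by move=> h; rewrite mem_undup fsq_suppP.
rewrite (l1E us hx) (l1E us) ?mulr_sumr.
  by apply: eq_bigr => w _; rewrite fsq_scaleE normrM.
by move=> w; rewrite fsq_scaleE mulf_eq0 negb_or => /andP [_ /hx].
Qed.

Lemma l1_sum (I : Type) (s : seq I) (F : I -> fsq O) :
  l1 (\sum_(i <- s) F i) <= \sum_(i <- s) l1 (F i).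
Proof.
elim: s => [|i s IH].
  by rewrite !big_nil (@l1E _ [::]) ?big_nil.
by rewrite !big_cons; apply: le_trans (l1D _ _) _; exact: lerD.
Qed.

Program Definition delta (r : O) : fsq O :=
  @FSQ O (fun v => if v == r then 1 else 0) _.
Next Obligation.
by exists [:: r] => w; rewrite mem_seq1; case: (w == r); rewrite ?eqxx.
Qed.

Lemma fsq_decomp x : x = \sum_(w <- undup (fsq_supp x)) x w *: delta w.
Proof.
apply: fsq_inj; apply: functional_extensionality => v; rewrite fsq_sumE.
rewrite (eq_bigr (fun w => if w == v then x w else 0)); last first.
  move=> w _; rewrite fsq_scaleE /= (eq_sym v).
  by case: (w == v); rewrite ?mulr1 ?mulr0.
have [xv0|xv_nz] := eqVneq (x v) 0.
  by rewrite big1 ?xv0 // => w _; case: eqP => // ->.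
rewrite (bigD1_seq v) ?undup_uniq ?mem_undup ?fsq_suppP //= eqxx.
by rewrite big1 ?addr0 // => w /negbTE ->.
Qed.

End L1Norm.

Section PermutationAction.
Variables (G : TDLCGroup) (O : GSet G).

Lemma actK g (w : O) : gs_act (ginv g) (gs_act g w) = w.
Proof. by rewrite -gs_actM gmulVl gs_act1. Qed.

Lemma actVK g (w : O) : gs_act g (gs_act (ginv g) w) = w.
Proof. by rewrite -gs_actM gmulVr gs_act1. Qed.

Lemma act_delta g (r : O) : fsq_act g (delta r) = delta (gs_act g r).
Proof.
apply: fsq_inj; apply: functional_extensionality => v /=.
have [->|ne] := eqVneq v (gs_act g r); first by rewrite actK eqxx.
by case: eqP => // e; case/eqP: ne; rewrite -e actVK.
Qed.

Lemma l1_act g (y : fsq O) : l1 (fsq_act g y) = l1 y.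
Proof.
have inj : injective (gs_act g : O -> O) by apply: (can_inj (actK g)).
rewrite (@l1E _ _ (map (gs_act g) (undup (fsq_supp y)))).
- by rewrite big_map /l1; apply: eq_bigr => v _ /=; rewrite actK.
- by rewrite map_inj_uniq ?undup_uniq.
move=> w /= h; apply/mapP; exists (gs_act (ginv g) w); last by rewrite actVK.
by rewrite mem_undup fsq_suppP.
Qed.

End PermutationAction.

Lemma ler_sum_mem (R' : numDomainType) (I : eqType) (s : seq I) (F : I -> R') r :
  (forall i, 0 <= F i) -> r \in s -> F r <= \sum_(i <- s) F i.
Proof.
move=> F_ge0; elim: s => [|i s IH] //; rewrite in_cons big_cons.
case/orP=> [/eqP ->|/IH le_r_s]; first by rewrite lerDl sumr_ge0.
by apply: le_trans le_r_s _; rewrite lerDr.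
Qed.

Section Comparison.
Variables (G : TDLCGroup) (M : lmodType rat) (actM : G -> M -> M).
Variables (O1 O2 : GSet G) (d1 : {linear fsq O1 -> M}) (d2 : {linear fsq O2 -> M}).
Hypothesis d1_equiv : forall g x, d1 (fsq_act g x) = actM g (d1 x).
Hypothesis d2_equiv : forall g x, d2 (fsq_act g x) = actM g (d2 x).
Hypothesis d2_onto : forall m, exists x, d2 x = m.

(* Each basis vector delta_w of Q[O1] has a d2-lift of d1(delta_w) of
   uniformly bounded l1-norm: lift the finitely many orbit representatives
   and translate. *)
Lemma lift_basis_bounded : finite_orbits O1 ->
  exists (K : rat) (y : O1 -> fsq O2),
    0 <= K /\ forall w, d2 (y w) = d1 (delta w) /\ l1 (y w) <= K.
Proof.
move=> [s orbit_reps].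
pose lift (r : O1) :=
  epsilon (inhabits 0) (fun z : fsq O2 => d2 z = d1 (delta r)).
have liftP r : d2 (lift r) = d1 (delta r).
  exact: (epsilon_spec _ (fun z : fsq O2 => d2 z = d1 (delta r)) (d2_onto _)).
pose rep (w : O1) := epsilon (inhabits (gone G, w))
  (fun p : G * O1 => p.2 \in s /\ w = gs_act p.1 p.2).
have repP w : (rep w).2 \in s /\ w = gs_act (rep w).1 (rep w).2.
  apply: (epsilon_spec _ (fun p : G * O1 => p.2 \in s /\ w = gs_act p.1 p.2)).
  by have [g [r [rs ->]]] := orbit_reps w; exists (g, r).
exists (\sum_(r <- s) l1 (lift r)), (fun w => fsq_act (rep w).1 (lift (rep w).2)).
split=> [|w]; first by apply: sumr_ge0 => r _; exact: l1_ge0.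
have [rep_s rep_w] := repP w; split.
  by rewrite d2_equiv liftP -d1_equiv act_delta -rep_w.
rewrite l1_act; apply: (ler_sum_mem (F := fun r => l1 (lift r))) rep_s => r.
exact: l1_ge0.
Qed.

Lemma lift_with_bounded_l1 : finite_orbits O1 ->
  exists C : rat, 0 < C /\ forall x, exists z, d2 z = d1 x /\ l1 z <= C * l1 x.
Proof.
move=> fo1; have [K [y [K_ge0 yP]]] := lift_basis_bounded fo1.
exists (K + 1); split=> [|x]; first by rewrite ltr_wpDl.
set S := undup (fsq_supp x).
exists (\sum_(w <- S) x w *: y w); split.
  rewrite [in RHS](fsq_decomp x) !linear_sum.
  by apply: eq_bigr => w _; rewrite !linearZ /= (yP w).1.
apply: le_trans (l1_sum _ _) _.
apply: (@le_trans _ _ (\sum_(w <- S) `|x w| * K)).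
  by apply: ler_sum => w _; rewrite l1Z ler_wpM2l // (yP w).2.
by rewrite -mulr_suml -/(l1 x) mulrC ler_wpM2r ?l1_ge0 // lerDl.
Qed.

End Comparison.

Lemma filling_norm_inf (O : choiceType) (M : lmodType rat) (d : fsq O -> M) m :
  (exists x, d x = m) ->
  is_inf (fun r => exists x : fsq O, d x = m /\ r = rat2R (l1 x))
         (filling_norm d m).
Proof.
move=> [x dx]; apply: inf_RP; first by exists (rat2R (l1 x)), x.
move=> r [y [_ ->]]; apply/RleP; rewrite rat2RE ler0q; exact: l1_ge0.
Qed.

Lemma filling_norm_ge0 (O : choiceType) (M : lmodType rat) (d : fsq O -> M) m :
  (exists x, d x = m) -> Rle 0 (filling_norm d m).
Proof.
move/filling_norm_inf => [_]; apply => r [y [_ ->]].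
by apply/RleP; rewrite rat2RE ler0q l1_ge0.
Qed.

Lemma filling_norm_le (O1 O2 : choiceType) (M : lmodType rat)
    (d1 : fsq O1 -> M) (d2 : fsq O2 -> M) (C : rat) m :
  0 < C -> (exists x, d1 x = m) ->
  (forall x, d1 x = m -> exists z, d2 z = m /\ l1 z <= C * l1 x) ->
  Rle (filling_norm d2 m) (Rmult (ratr C) (filling_norm d1 m)).
Proof.
move=> C_gt0 [x0 dx0] refill.
have C'_gt0 : 0 < ratr C :> R by rewrite ltr0q.
have [z0 [dz0 _]] := refill x0 dx0.
have [lb2 _] := filling_norm_inf (ex_intro _ z0 dz0).
have [_ glb1] := filling_norm_inf (ex_intro _ x0 dx0).
apply/RleP; rewrite -ler_pdivrMl //; apply/RleP/glb1 => r [x [dx ->]].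
have [z [dz lz]] := refill x dx.
apply/RleP; rewrite ler_pdivrMl // rat2RE -rmorphM /=.
apply: le_trans (_ : rat2R (l1 z) <= _); last by rewrite rat2RE ler_rat.
by apply/RleP/lb2; exists z.
Qed.

Lemma filling_norms_equiv (G : TDLCGroup) (M : lmodType rat) (actM : G -> M -> M)
    (O1 O2 : GSet G) (d1 : {linear fsq O1 -> M}) (d2 : {linear fsq O2 -> M}) :
  finite_orbits O1 -> finite_orbits O2 ->
  (forall g x, d1 (fsq_act g x) = actM g (d1 x)) ->
  (forall g x, d2 (fsq_act g x) = actM g (d2 x)) ->
  (forall m, exists x, d1 x = m) -> (forall m, exists x, d2 x = m) ->
  equiv_pnorms (filling_norm d1) (filling_norm d2).
Proof.
move=> fo1 fo2 e1 e2 s1 s2.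
have [C1 [C1_gt0 lift12]] := lift_with_bounded_l1 e1 e2 s2 fo1.
have [C2 [C2_gt0 lift21]] := lift_with_bounded_l1 e2 e1 s1 fo2.
have le21 m : Rle (filling_norm d2 m) (Rmult (ratr C1) (filling_norm d1 m)).
  by apply: (filling_norm_le C1_gt0 (s1 m)) => x <-; exact: lift12.
have le12 m : Rle (filling_norm d1 m) (Rmult (ratr C2) (filling_norm d2 m)).
  by apply: (filling_norm_le C2_gt0 (s2 m)) => x <-; exact: lift21.
have C1' : Rlt 0 (ratr C1) by apply/RltP; rewrite ltr0q.
have C2' : Rlt 0 (ratr C2) by apply/RltP; rewrite ltr0q.
exists (Rplus (ratr C1) (ratr C2)); split=> [|m]; first lra.
have n1_ge0 := filling_norm_ge0 (s1 m); have n2_ge0 := filling_norm_ge0 (s2 m).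
split; [apply: Rle_trans (le12 m) _ | apply: Rle_trans (le21 m) _];
  apply: Rmult_le_compat_r => //; lra.
Qed.

Definition idlin (O : choiceType) : {linear fsq O -> fsq O} := idfun.

Lemma filling_norm_id (O : choiceType) (x : fsq O) :
  filling_norm (idlin O) x = l1R x.
Proof.
have [lb glb] := filling_norm_inf (d := idlin O) (ex_intro _ x erefl).
apply: Rle_antisym; first by apply: lb; exists x.
by apply: glb => r [y [/= -> ->]]; exact: Rle_refl.
Qed.

Lemma l1R_eq0 (O : choiceType) (x : fsq O) : l1R x = R0 -> x = 0.
Proof. by rewrite /l1R rat2RE => /eqP; rewrite fmorph_eq0 => /eqP /l1_eq0. Qed.

Theorem corollary4p3 (G : TDLCGroup) :
  (forall M : DiscreteModule G, fg_module M ->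
     forall (O1 O2 : GSet G) (d1 : {linear fsq O1 -> M}) (d2 : {linear fsq O2 -> M}),
       filling_map (@dm_act G M) d1 -> filling_map (@dm_act G M) d2 ->
       equiv_pnorms (filling_norm d1) (filling_norm d2))
  /\
  (forall (O O' : GSet G) (d : {linear fsq O' -> fsq O}),
     proper_gset O -> finite_orbits O ->
     filling_map (@fsq_act G O) d ->
     equiv_pnorms (filling_norm d) (@l1R O) /\
     (forall x : fsq O, filling_norm d x = R0 -> x = 0%R)).
Proof.
split=> [M _ O1 O2 d1 d2 [_ fo1 e1 s1] [_ fo2 e2 s2] | O O' d _ fo [_ fo' e s]].
  exact: filling_norms_equiv.
have [C [C_gt0 hC]] : equiv_pnorms (filling_norm d) (filling_norm (idlin O)).
  by apply: filling_norms_equiv => // m; exists m.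
split=> [|x dx0]; first by exists C; split=> // v; rewrite -filling_norm_id.
apply: l1R_eq0; have := (hC x).2; rewrite filling_norm_id dx0 Rmult_0_r => le0.
apply: Rle_antisym => //; apply/RleP; rewrite /l1R rat2RE ler0q; exact: l1_ge0.
Qed.
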